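(* Let $\Sigma$ be a finite alphabet and let $p:\mathcal{Q}\to\mathcal{F}(B_\Sigma)$ be a functor of categories. Then $p$ is ULF and finitary if and only if $p$ is (up to isomorphism of categories over $\mathcal{F}(B_\Sigma)$) the functor associated to a bare nondeterministic finite-state automaton over $\Sigma$; that is, iff there exist finite sets $Q$ and $T$ and a function $\delta:T\to Q\times\Sigma\times Q$, and an isomorphism between $\mathcal{Q}$ and the free category on the graph with nodes $Q$ and an edge $t:q\to q'$ for each $t\in T$ with $\delta(t)=(q,a,q')$, under which $p$ corresponds to the functor sending each such edge $t$ to the letter $a$.
   Context: $B_\Sigma$ is the bouquet graph with one node $*$ and one loop $a:*\to *$ for each $a\in\Sigma$; its free category $\mathcal{F}(B_\Sigma)$ has one object, whose arrows are the words over $\Sigma$ with composition given by concatenation. The free category on a graph has the nodes as objects and finite paths as arrows. Composition is written diagrammatically. A functor $p:\mathcal{D}\to\mathcal{C}$ is ULF if for every arrow $\alpha$ of $\mathcal{D}$ and arrows $u,v$ of $\mathcal{C}$ with $p(\alpha)=uv$ there is a unique pair of arrows $\beta,\gamma$ of $\mathcal{D}$ with $\alpha=\beta\gamma$, $p(\beta)=u$, $p(\gamma)=v$. It is finitary if the fibers $p^{-1}(A)$ (objects over $A$) and $p^{-1}(w)$ (arrows over $w$) are finite for every object $A$ and arrow $w$ of $\mathcal{C}$. *)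

From Stdlib Require List.
From mathcomp Require Import all_boot.
Set Implicit Arguments. Unset Strict Implicit. Unset Printing Implicit Defensive.

Record Category := {
  Ob : Type;
  Hom : Ob -> Ob -> Type;
  cid : forall X, Hom X X;
  ccomp : forall X Y Z, Hom X Y -> Hom Y Z -> Hom X Z;   (* ccomp f g = "f g" *)
  ccomp_id_l : forall X Y (f : Hom X Y), ccomp (cid X) f = f;
  ccomp_id_r : forall X Y (f : Hom X Y), ccomp f (cid Y) = f;
  ccomp_assoc : forall X Y Z W (f : Hom X Y) (g : Hom Y Z) (h : Hom Z W),
      ccomp (ccomp f g) h = ccomp f (ccomp g h) }.
Arguments cid {c} X.
Arguments ccomp {c X Y Z}.

Record Functor (C D : Category) := {
  fob : Ob C -> Ob D;
  fmor : forall X Y, Hom X Y -> Hom (fob X) (fob Y);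
  fmor_id : forall X, fmor (cid X) = cid (fob X);
  fmor_comp : forall X Y Z (f : Hom X Y) (g : Hom Y Z),
      fmor (ccomp f g) = ccomp (fmor f) (fmor g) }.
Arguments fob {C D} f0 _ : rename.
Arguments fmor {C D} f0 {X Y} _ : rename.

Definition isomorphism (C D : Category) (F : Functor C D) : Prop :=
  bijective (fob F) /\ forall X Y : Ob C, bijective (@fmor C D F X Y).

Definition finite_type (A : Type) : Prop := exists l : list A, forall x, List.In x l.

Section Bouquet.
Variable Sigma : Type.
Definition FB : Category :=
  {| Ob := unit; Hom := fun _ _ => seq Sigma; cid := fun _ => [::];
     ccomp := fun _ _ _ u v => u ++ v;
     ccomp_id_l := fun _ _ f => cat0s f;
     ccomp_id_r := fun _ _ f => cats0 f;
     ccomp_assoc := fun _ _ _ _ f g h => esym (catA f g h) |}.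
End Bouquet.

Definition ULF (Sigma : Type) (C : Category) (p : Functor C (FB Sigma)) : Prop :=
  forall (X Y : Ob C) (alpha : Hom X Y) (u v : seq Sigma),
    fmor p alpha = u ++ v ->
    exists! bg : {Z : Ob C & (Hom X Z * Hom Z Y)%type},
      [/\ ccomp (projT2 bg).1 (projT2 bg).2 = alpha,
          fmor p (projT2 bg).1 = u & fmor p (projT2 bg).2 = v].

Definition finitary (Sigma : Type) (C : Category) (p : Functor C (FB Sigma)) : Prop :=
  (forall A : Ob (FB Sigma), finite_type {X : Ob C | fob p X = A}) /\
  (forall w : seq Sigma,
      finite_type {X : Ob C & {Y : Ob C & {f : Hom X Y | fmor p f = w}}}).

Section Automaton.
Variables (Sigma : Type) (Q T : finType) (delta : T -> Q * Sigma * Q).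
Definition tsrc (t : T) : Q := (delta t).1.1.
Definition tlbl (t : T) : Sigma := (delta t).1.2.
Definition ttgt (t : T) : Q := (delta t).2.

Fixpoint is_path (q : Q) (s : seq T) (q' : Q) : bool :=
  match s with
  | [::] => q == q'
  | t :: s' => (tsrc t == q) && is_path (ttgt t) s' q'
  end.

Lemma is_path_cat q r q' s1 s2 :
  is_path q s1 r -> is_path r s2 q' -> is_path q (s1 ++ s2) q'.
Proof.
elim: s1 q => [|t s1 IH] q /=; first by move/eqP->.
by case/andP=> -> H1 H2; rewrite IH.
Qed.

Definition fpath (q q' : Q) := {s : seq T | is_path q s q'}.
Definition fid (q : Q) : fpath q q := exist _ [::] (eqxx q).
Definition fcomp (q r q' : Q) (a : fpath q r) (b : fpath r q') : fpath q q' :=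
  exist _ (proj1_sig a ++ proj1_sig b) (is_path_cat (proj2_sig a) (proj2_sig b)).

Lemma fpath_eq q q' (a b : fpath q q') : proj1_sig a = proj1_sig b -> a = b.
Proof.
case: a b => [s Hs] [s' Hs'] /= E; subst s'.
by rewrite (bool_irrelevance Hs Hs').
Qed.

Lemma fcomp_id_l q q' (a : fpath q q') : fcomp (fid q) a = a.
Proof. exact: fpath_eq. Qed.
Lemma fcomp_id_r q q' (a : fpath q q') : fcomp a (fid q') = a.
Proof. by apply: fpath_eq; rewrite /= cats0. Qed.
Lemma fcomp_assoc q1 q2 q3 q4 (a : fpath q1 q2) (b : fpath q2 q3) (c : fpath q3 q4) :
  fcomp (fcomp a b) c = fcomp a (fcomp b c).
Proof. by apply: fpath_eq; rewrite /= catA. Qed.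

Definition FreeAut : Category :=
  {| Ob := Q; Hom := fpath; cid := fid; ccomp := fcomp;
     ccomp_id_l := fcomp_id_l; ccomp_id_r := fcomp_id_r;
     ccomp_assoc := fcomp_assoc |}.

Definition aut_mor (q q' : Q) (a : fpath q q') : seq Sigma := map tlbl (proj1_sig a).

Definition AutFunctor : Functor FreeAut (FB Sigma) :=
  {| fob := (fun _ => tt) : Ob FreeAut -> Ob (FB Sigma);
     fmor := aut_mor;
     fmor_id := fun _ => erefl;
     fmor_comp := fun _ _ _ a b => map_cat tlbl (proj1_sig a) (proj1_sig b) |}.
End Automaton.

From mathcomp Require Import all_boot.
From Stdlib Require Import ClassicalEpsilon Eqdep.
Set Implicit Arguments. Unset Strict Implicit. Unset Printing Implicit Defensive.

(* If p is ULF, every arrow of C factors uniquely as a composite of arrows sent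
   to one-letter words ("atoms"), and arrows over the empty word are
   identities. Taking the objects of C as states and the atoms as transitions
   (finitely many of each when p is finitary) therefore presents C as the free
   category of an automaton. Conversely, the free category of an automaton is
   ULF (a path over u ++ v splits exactly after its first |u| transitions) and
   finitary (a path over w is determined by its endpoints and a |w|-tuple of
   transitions), and both properties transfer along isomorphisms over
   F(B_Sigma). *)

Lemma finite_type_fin (F : finType) : finite_type F.
Proof.
exists (enum F) => x; have : x \in enum F by rewrite mem_enum.
by elim: (enum F) => //= y s IH; rewrite in_cons => /predU1P[->|/IH]; [left|right].
Qed.

Lemma finite_type_surj (A B : Type) (h : A -> B) :
  (forall b, exists a, h a = b) -> finite_type A -> finite_type B.
Proof.
move=> h_surj [l Hl]; exists (List.map h l) => b.
by have [a <-] := h_surj b; apply: List.in_map.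
Qed.

Lemma finite_type_sigma (I : finType) (B : I -> Type) :
  (forall i, finite_type (B i)) -> finite_type {i : I & B i}.
Proof.
move=> finB; pose l i := sval (constructive_indefinite_description _ (finB i)).
have [lI HlI] := finite_type_fin I.
exists (List.flat_map (fun i => List.map (existT B i) (l i)) lI) => -[i x].
apply/List.in_flat_map; exists i; split; first exact: HlI.
by apply: List.in_map; rewrite /l; case: constructive_indefinite_description.
Qed.

Lemma finite_type_ord_inj (A : Type) :
  finite_type A -> exists n (f : A -> 'I_n), injective f.
Proof.
case=> l Hl.
have index a : exists i : 'I_(length l), List.nth_error l i = Some a.
  have [i Ei] := List.In_nth_error _ _ (Hl a).
  have /ltP lt_i : (i < length l)%coq_nat by apply/List.nth_error_Some; rewrite Ei.
  by exists (Ordinal lt_i).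
exists (length l), (fun a => sval (constructive_indefinite_description _ (index a))).
move=> a b; case: constructive_indefinite_description => i Ea.
by case: constructive_indefinite_description => j Eb /= Eij; move: Ea; rewrite Eij Eb => -[].
Qed.

Lemma finType_bij_of_inj (A : Type) (F : finType) (f : A -> F) :
  injective f -> exists (Q : finType) (g : A -> Q), bijective g.
Proof.
move=> f_inj.
pose in_image y := if excluded_middle_informative (exists a, f a = y) then true else false.
have in_imageP y : reflect (exists a, f a = y) (in_image y).
  by rewrite /in_image; case: excluded_middle_informative => H; constructor.
have preim (y : {y | in_image y}) : exists a, f a = val y by apply/in_imageP/valP.
exists ({y | in_image y} : finType).
exists (fun a => exist _ (f a) (introT (in_imageP _) (ex_intro _ a erefl))).
exists (fun y => sval (constructive_indefinite_description _ (preim y))).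
  by move=> a; apply: f_inj; case: constructive_indefinite_description.
by move=> y; apply: val_inj; case: constructive_indefinite_description.
Qed.

Lemma finite_type_inj (A B : Type) (i : B -> A) :
  injective i -> finite_type A -> finite_type B.
Proof.
move=> i_inj /finite_type_ord_inj[n [f f_inj]].
have [Q [g [h gK _]]] := finType_bij_of_inj (inj_comp f_inj i_inj).
apply: (finite_type_surj (h := h) _ (finite_type_fin Q)) => b; exists (g b); exact: gK.
Qed.

Lemma finType_bij_of_finite (A : Type) :
  finite_type A -> exists (Q : finType) (g : A -> Q), bijective g.
Proof. by case/finite_type_ord_inj=> n [f /finType_bij_of_inj]. Qed.

Lemma finite_type_unit_fiber (A : Type) (f : A -> unit) (u : unit) :
  finite_type {x | f x = u} <-> finite_type A.
Proof.
split.
  apply: (finite_type_surj (h := sval)) => x.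
  by exists (exist _ x (etrans (unitE _) (esym (unitE u)))).
apply: (finite_type_inj (i := sval)) => -[x Hx] [y Hy] /= Exy; subst y.
by rewrite (eq_irrelevance Hx Hy).
Qed.

Lemma bij_of_inj_surj (A B : Type) (f : A -> B) :
  injective f -> (forall b, exists a, f a = b) -> bijective f.
Proof.
move=> f_inj f_surj; pose g b := sval (constructive_indefinite_description _ (f_surj b)).
exists g => [a|b]; rewrite /g; case: constructive_indefinite_description => //= a'.
exact: f_inj.
Qed.

Section AutomatonFunctor.
Variables (Sigma : Type) (Q T : finType) (delta : T -> Q * Sigma * Q).

Definition path_end (q : Q) (s : seq T) : Q := last q (map (ttgt delta) s).

Lemma is_path_catE q q' s1 s2 :
  is_path delta q (s1 ++ s2) q' =
  is_path delta q s1 (path_end q s1) && is_path delta (path_end q s1) s2 q'.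
Proof. by elim: s1 q => [|t s1 IH] q /=; rewrite ?eqxx // IH andbA. Qed.

Lemma is_path_end q q' s : is_path delta q s q' -> q' = path_end q s.
Proof. by elim: s q => [|t s IH] q /=; [move/eqP | case/andP=> _ /IH]. Qed.

Lemma AutFunctor_ULF : ULF (AutFunctor delta).
Proof.
move=> q q' [s Hs] u v; rewrite /= /aut_mor /= => Euv.
pose n := size u; pose r := path_end q (take n s).
have /andP[Hs1 Hs2] : is_path delta q (take n s) r && is_path delta r (drop n s) q'.
  by rewrite -is_path_catE cat_take_drop.
exists (existT _ r (exist (fun s => is_path delta q s r) _ Hs1,
                    exist (fun s => is_path delta r s q') _ Hs2)); split.
  split; first by apply: fpath_eq; rewrite /= cat_take_drop.
    by rewrite /= /aut_mor /= map_take Euv take_size_cat.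
  by rewrite /= /aut_mor /= map_drop Euv drop_size_cat.
move=> [r' [[s1 Hs1'] [s2 Hs2']]] [/(congr1 sval) /= Es Eu _].
have size_s1 : size s1 = n by rewrite /n -Eu size_map.
have Es1 : s1 = take n s by rewrite -Es -size_s1 take_size_cat.
have Es2 : s2 = drop n s by rewrite -Es -size_s1 drop_size_cat.
subst s1 s2; have Er := is_path_end Hs1'; subst r'.
by rewrite (bool_irrelevance Hs1' Hs1) (bool_irrelevance Hs2' Hs2).
Qed.

Lemma AutFunctor_finitary : finitary (AutFunctor delta).
Proof.
split=> [A|w]; first exact/finite_type_unit_fiber/finite_type_fin.
have size_word (s : seq T) : map (tlbl delta) s = w -> size s == size w.
  by move<-; rewrite size_map.
pose code
    (x : {q : Q & {q' : Q & {f : @Hom (FreeAut delta) q q' | fmor (AutFunctor delta) f = w}}}) :=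
  let: existT q (existT q' (exist f Hf)) := x in (q, q', Tuple (size_word _ Hf)).
apply: (finite_type_inj (i := code)) (finite_type_fin _).
move=> [q [q' [f Hf]]] [r [r' [g Hg]]] [Eq Eq' Et].
subst r r'; have Efg := fpath_eq Et; subst g.
by rewrite (UIP _ _ _ Hf Hg).
Qed.
End AutomatonFunctor.

Section IsoTransfer.
Variables (Sigma : Type) (C D : Category).
Variables (p : Functor C (FB Sigma)) (q : Functor D (FB Sigma)) (F : Functor C D).
Hypothesis isoF : isomorphism F.
Hypothesis qFE : forall X Y (f : Hom X Y), fmor q (fmor F f) = fmor p f.

Lemma iso_ob_inj : injective (fob F).
Proof. exact: bij_inj isoF.1. Qed.

Lemma iso_hom_inj X Y : injective (@fmor _ _ F X Y).
Proof. exact: bij_inj (isoF.2 X Y). Qed.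

Lemma iso_ob_surj X' : exists X, fob F X = X'.
Proof. by have [g _ gK] := isoF.1; exists (g X'). Qed.

Lemma iso_hom_surj X Y (f' : Hom (fob F X) (fob F Y)) : exists f, fmor F f = f'.
Proof. by have [g _ gK] := isoF.2 X Y; exists (g f'). Qed.

Lemma iso_factor_inj X Y :
  injective (fun s : {Z : Ob C & (Hom X Z * Hom Z Y)%type} =>
    existT (fun Z' => (Hom (fob F X) Z' * Hom Z' (fob F Y))%type)
           (fob F (projT1 s)) (fmor F (projT2 s).1, fmor F (projT2 s).2)).
Proof.
move=> [Z [b c]] [Z' [b' c']] /= E; have EZ := iso_ob_inj (projT1_eq E); subst Z'.
by case: (inj_pairT2 _ _ _ _ _ E) => /iso_hom_inj-> /iso_hom_inj->.
Qed.

Lemma ULF_iso : ULF q -> ULF p.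
Proof.
move=> ulf_q X Y alpha u v Euv.
have [[Z' [b' c']] [[Ebc Eb Ec] uniq_q]] :=
  ulf_q _ _ (fmor F alpha) u v (etrans (qFE alpha) Euv).
have [Z EZ] := iso_ob_surj Z'; subst Z'.
have [b Eb'] := iso_hom_surj b'; have [c Ec'] := iso_hom_surj c'; subst b' c'.
exists (existT _ Z (b, c)); split.
  by split; rewrite -?qFE //=; apply: iso_hom_inj; rewrite fmor_comp.
move=> [Z2 [b2 c2]] /= [E1 E2 E3]; apply: iso_factor_inj; apply: uniq_q.
by split; rewrite /= ?qFE // -fmor_comp E1.
Qed.

Lemma finitary_iso : finitary q -> finitary p.
Proof.
move=> [fin_obq fin_homq]; split=> [A|w].
  apply/finite_type_unit_fiber/(finite_type_inj iso_ob_inj).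
  exact/(finite_type_unit_fiber _ A).
pose image (x : {X : Ob C & {Y : Ob C & {f : Hom X Y | fmor p f = w}}}) :
    {X' : Ob D & {Y' : Ob D & {f' : Hom X' Y' | fmor q f' = w}}} :=
  let: existT X (existT Y (exist f Hf)) := x in
  existT _ (fob F X) (existT _ (fob F Y) (exist _ (fmor F f) (etrans (qFE f) Hf))).
apply: (finite_type_inj (i := image)) (fin_homq w).
move=> [X [Y [f Hf]]] [X' [Y' [f' Hf']]] /= E.
have EX := iso_ob_inj (projT1_eq E); subst X'.
have {}E := inj_pairT2 _ _ _ _ _ E; have EY := iso_ob_inj (projT1_eq E); subst Y'.
have /(congr1 sval)/iso_hom_inj Ef := inj_pairT2 _ _ _ _ _ E; subst f'.
by rewrite (UIP _ _ _ Hf Hf').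
Qed.
End IsoTransfer.

Section AtomDecomposition.
Variables (Sigma : eqType) (C : Category) (p : Functor C (FB Sigma)).
Hypothesis ulf_p : ULF p.

Lemma ULF_nil X Y (f : Hom X Y) :
  fmor p f = [::] -> existT (Hom X) Y f = existT (Hom X) X (cid X).
Proof.
move=> Ef; have [bg [_ uniq]] := ulf_p (u := [::]) Ef.
have E : existT _ Y (f, cid Y) = existT _ X (cid X, f)
    :> {Z : Ob C & (Hom X Z * Hom Z Y)%type}.
  apply: etrans (esym (uniq _ _)) (uniq _ _);
  by split; rewrite /= ?ccomp_id_l ?ccomp_id_r ?fmor_id.
exact (congr1 (fun s => existT (Hom X) (projT1 s) (projT2 s).1) E).
Qed.

Lemma ULF_cons X Y (f : Hom X Y) a w : fmor p f = a :: w ->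
  exists Z (b : Hom X Z) (c : Hom Z Y), [/\ ccomp b c = f, fmor p b = [:: a] & fmor p c = w].
Proof.
by move=> Ef; have [[Z [b c]] [[Ebc Eb Ec] _]] := ulf_p (u := [:: a]) Ef; exists Z, b, c.
Qed.

Lemma ULF_ind (P : forall X Y, Hom X Y -> Prop) :
  (forall X, P X X (cid X)) ->
  (forall X Z Y a (b : Hom X Z) (c : Hom Z Y),
     fmor p b = [:: a] -> P Z Y c -> P X Y (ccomp b c)) ->
  forall X Y (f : Hom X Y), P X Y f.
Proof.
move=> P_id P_comp X Y f; have [w Ew] : exists w : seq Sigma, fmor p f = w by eexists.
elim: w X f Ew => [|a w IH] X f Ef.
  change (P X (projT1 (existT (Hom X) Y f)) (projT2 (existT (Hom X) Y f))).
  by rewrite (ULF_nil Ef).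
by have [Z [b [c [<- Eb Ec]]]] := ULF_cons Ef; apply: P_comp Eb (IH _ _ Ec).
Qed.

Definition Edge := {a : Sigma & {X : Ob C & {Y : Ob C & {f : Hom X Y | fmor p f == [:: a]}}}}.
Definition elabel (e : Edge) : Sigma := projT1 e.
Definition esrc (e : Edge) : Ob C := projT1 (projT2 e).
Definition etgt (e : Edge) : Ob C := projT1 (projT2 (projT2 e)).
Definition earrow (e : Edge) : {X : Ob C & {Y : Ob C & Hom X Y}} :=
  existT _ (esrc e) (existT _ (etgt e) (sval (projT2 (projT2 (projT2 e))))).

Definition atom a X Y (f : Hom X Y) (Hf : fmor p f == [:: a]) : Edge :=
  existT _ a (existT _ X (existT _ Y (exist _ f Hf))).

Definition as_atom a X Y (f : Hom X Y) : option Edge :=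
  omap (fun g : {g : Hom X Y | fmor p g == [:: a]} => atom (proj2_sig g)) (insub f).

Lemma as_atomE a X Y (f : Hom X Y) (Hf : fmor p f == [:: a]) : as_atom a f = Some (atom Hf).
Proof. by rewrite /as_atom (insubT (fun g : Hom X Y => fmor p g == [:: a]) Hf). Qed.

Lemma atom_inj a a' X Z Z' (b : Hom X Z) (b' : Hom X Z') Hb Hb' :
  @atom a X Z b Hb = @atom a' X Z' b' Hb' -> existT (Hom X) Z b = existT (Hom X) Z' b'.
Proof. by move=> E; exact: inj_pairT2 _ _ _ _ _ (congr1 earrow E). Qed.

Definition split_head X Y (f : Hom X Y) : {Z : Ob C & (Hom X Z * Hom Z Y)%type} :=
  sval (constructive_indefinite_description _
    (ulf_p (esym (cat_take_drop 1 (fmor p f))))).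

Lemma split_head_atom a X Z Y (b : Hom X Z) (c : Hom Z Y) :
  fmor p b = [:: a] -> split_head (ccomp b c) = existT _ Z (b, c).
Proof.
rewrite /split_head => Eb; case: constructive_indefinite_description => s [_ uniq] /=.
by apply: uniq; split; rewrite //= fmor_comp Eb /= ?take0 ?drop0.
Qed.

(* The [None] branch is unreachable: when [fmor p f = a :: w], [b] is an atom labelled [a]. *)
Fixpoint factor_along (w : seq Sigma) X Y (f : Hom X Y) : seq Edge :=
  if w is a :: w' then
    let: existT Z (b, c) := split_head f in
    if as_atom a b is Some e then e :: factor_along w' c else [::]
  else [::].

Definition atoms X Y (f : Hom X Y) : seq Edge := factor_along (fmor p f) f.

Lemma atoms_cid X : atoms (cid X) = [::].
Proof. by rewrite /atoms fmor_id. Qed.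

Lemma atoms_comp_atom a X Z Y (b : Hom X Z) (c : Hom Z Y) (Hb : fmor p b == [:: a]) :
  atoms (ccomp b c) = atom Hb :: atoms c.
Proof.
have Eb := eqP Hb.
by rewrite /atoms fmor_comp Eb /= (split_head_atom c Eb) (as_atomE Hb).
Qed.

Lemma map_elabel_atoms X Y (f : Hom X Y) : map elabel (atoms f) = fmor p f.
Proof.
elim/ULF_ind: X Y / f => [X|X Z Y a b c Eb IH]; first by rewrite atoms_cid fmor_id.
by rewrite (atoms_comp_atom c (introT eqP Eb)) /= IH fmor_comp Eb.
Qed.

Fixpoint chain (X : Ob C) (s : seq Edge) (Y : Ob C) : Prop :=
  if s is e :: s' then esrc e = X /\ chain (etgt e) s' Y else X = Y.

Lemma atoms_chain X Y (f : Hom X Y) : chain X (atoms f) Y.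
Proof.
elim/ULF_ind: X Y / f => [X|X Z Y a b c Eb IH]; first by rewrite atoms_cid.
by rewrite (atoms_comp_atom c (introT eqP Eb)).
Qed.

Lemma atoms_comp X Y Z (f : Hom X Y) (g : Hom Y Z) : atoms (ccomp f g) = atoms f ++ atoms g.
Proof.
elim/ULF_ind: X Y / f g => [X|X Z' Y a b c Eb IH] g; first by rewrite ccomp_id_l atoms_cid.
by rewrite ccomp_assoc !(atoms_comp_atom _ (introT eqP Eb)) IH.
Qed.

Lemma atoms_inj X Y (f g : Hom X Y) : atoms f = atoms g -> f = g.
Proof.
elim/ULF_ind: X Y / f g => [X|X Z Y a b c Eb IH] g.
  rewrite atoms_cid => /(congr1 (map elabel)); rewrite map_elabel_atoms => /esym/ULF_nil.
  by move=> E; rewrite (inj_pairT2 _ _ _ _ _ E).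
have Hb : fmor p b == [:: a] by apply/eqP.
rewrite (atoms_comp_atom c Hb) => Eatoms.
have Eg : fmor p g = a :: fmor p c by rewrite -map_elabel_atoms -Eatoms /= map_elabel_atoms.
have [Z' [b' [c' [Egbc Eb' _]]]] := ULF_cons Eg; subst g.
rewrite (atoms_comp_atom c' (introT eqP Eb')) in Eatoms.
have /atom_inj Eb_b' := congr1 (head (atom Hb)) Eatoms.
have /= EZ := projT1_eq Eb_b'; subst Z'.
have Ecc' : atoms c = atoms c' := congr1 behead Eatoms.
by rewrite (inj_pairT2 _ _ _ _ _ Eb_b') (IH _ Ecc').
Qed.

Lemma chain_atoms X Y (s : seq Edge) : chain X s Y -> exists f : Hom X Y, atoms f = s.
Proof.
elim: s X => [|[a [X' [Z [b Hb]]]] s IH] X /=.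
  by move=> <-; exists (cid X); rewrite atoms_cid.
by case=> <- /IH[c <-]; exists (ccomp b c); exact: atoms_comp_atom.
Qed.
End AtomDecomposition.

Lemma edge_finite (Sigma : finType) (C : Category) (p : Functor C (FB Sigma)) :
  finitary p -> finite_type (Edge p).
Proof.
case=> _ fin_hom.
pose of_fiber
    (x : {a : Sigma & {X : Ob C & {Y : Ob C & {f : Hom X Y | fmor p f = [:: a]}}}}) :=
  let: existT a (existT X (existT Y (exist f Hf))) := x in atom (introT eqP Hf).
apply: (finite_type_surj (h := of_fiber)).
  move=> [a [X [Y [f Hf]]]]; exists (existT _ a (existT _ X (existT _ Y (exist _ f (eqP Hf))))).
  by rewrite /= (bool_irrelevance (introT eqP (eqP Hf)) Hf).
exact: finite_type_sigma (fun a => fin_hom [:: a]).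
Qed.

Section Presentation.
Variables (Sigma : eqType) (C : Category) (p : Functor C (FB Sigma)).
Hypothesis ulf_p : ULF p.
Variables (Q T : finType) (obQ : Ob C -> Q) (Qob : Q -> Ob C).
Variables (edgeT : Edge p -> T) (Tedge : T -> Edge p).
Hypotheses (obQK : cancel obQ Qob) (QobK : cancel Qob obQ).
Hypotheses (edgeTK : cancel edgeT Tedge) (TedgeK : cancel Tedge edgeT).

Definition presentation_delta (t : T) : Q * Sigma * Q :=
  (obQ (esrc (Tedge t)), elabel (Tedge t), obQ (etgt (Tedge t))).

Lemma is_path_chain X Y (s : seq (Edge p)) :
  is_path presentation_delta (obQ X) (map edgeT s) (obQ Y) <-> chain X s Y.
Proof.
elim: s X => [|e s IH] X /=; first by split=> [/eqP/(can_inj obQK)|->].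
rewrite /tsrc /ttgt /presentation_delta /= edgeTK -IH.
by split=> [/andP[/eqP/(can_inj obQK)]|[->]] -> //; rewrite eqxx.
Qed.

Definition presentation_mor X Y (f : Hom X Y) :
    @Hom (FreeAut presentation_delta) (obQ X) (obQ Y) :=
  exist _ (map edgeT (atoms ulf_p f)) ((is_path_chain _ _ _).2 (atoms_chain ulf_p f)).

Lemma presentation_id X : presentation_mor (cid X) = @cid (FreeAut presentation_delta) (obQ X).
Proof. by apply: fpath_eq; rewrite /= atoms_cid. Qed.

Lemma presentation_comp X Y Z (f : Hom X Y) (g : Hom Y Z) :
  presentation_mor (ccomp f g) = ccomp (presentation_mor f) (presentation_mor g).
Proof. by apply: fpath_eq; rewrite /= atoms_comp map_cat. Qed.

Definition presentation : Functor C (FreeAut presentation_delta) :=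
  Build_Functor presentation_id presentation_comp.

Lemma presentation_iso : isomorphism presentation.
Proof.
split=> [|X Y]; first exact: Bijective obQK QobK.
apply: bij_of_inj_surj => [f g /(congr1 (map Tedge \o sval))|[s Hs]].
  by rewrite /= !(mapK edgeTK); apply: atoms_inj.
have /is_path_chain/chain_atoms[f Ef] :
    is_path presentation_delta (obQ X) (map edgeT (map Tedge s)) (obQ Y).
  by rewrite (mapK TedgeK).
by exists f; apply: fpath_eq; rewrite /= Ef (mapK TedgeK).
Qed.

Lemma presentation_label X Y (f : Hom X Y) :
  fmor (AutFunctor presentation_delta) (fmor presentation f) = fmor p f.
Proof.
rewrite /= /aut_mor /= -map_comp -[RHS](map_elabel_atoms ulf_p f).
by apply: eq_map => e /=; rewrite /tlbl /presentation_delta /= edgeTK.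
Qed.
End Presentation.

Theorem mainTheorem3 (Sigma : finType) (C : Category) (p : Functor C (FB Sigma)) :
  (ULF p /\ finitary p) <->
  exists (Q T : finType) (delta : T -> Q * Sigma * Q)
         (F : Functor C (FreeAut delta)),
    isomorphism F /\
    forall (X Y : Ob C) (f : Hom X Y), fmor (AutFunctor delta) (fmor F f) = fmor p f.
Proof.
split=> [[ulf_p fin_p]|[Q [T [delta [F [isoF labelF]]]]]].
  have fin_ob : finite_type (Ob C) by apply/(finite_type_unit_fiber (fob p) tt)/fin_p.1.
  have [Q [obQ [Qob obQK QobK]]] := finType_bij_of_finite fin_ob.
  have [T [edgeT [Tedge edgeTK TedgeK]]] := finType_bij_of_finite (edge_finite fin_p).
  exists Q, T, (presentation_delta obQ Tedge), (presentation ulf_p obQK edgeTK).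
  by split; [exact: presentation_iso | exact: presentation_label].
by split; [exact: ULF_iso isoF labelF (@AutFunctor_ULF _ _ _ delta)
          | exact: finitary_iso isoF labelF (AutFunctor_finitary delta)].
Qed.
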